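(* Let $\kappa$ be a regular uncountable cardinal and $I$ a pleasant ideal on $\kappa$. If there is a thin set $S\in I^*$, then $I$ is quasinormal, and hence normal.
   Context: An ideal on $\kappa$ is a family of subsets of $\kappa$ closed under subsets and finite unions, which is $<\kappa$-complete and contains all singletons. $I^*=\{\kappa\setminus X: X\in I\}$. A set $S$ of ordinals is thin if $\alpha\in S$ implies $\alpha+1\notin S$. For $A\subseteq\kappa$ and $X_\alpha\subseteq\kappa$, $\bigtriangledown_{\alpha\in A}X_\alpha=\{\xi<\kappa:\exists\alpha<\xi\,(\alpha\in A\wedge \xi\in X_\alpha)\}$. $I$ is normal if $X_\alpha\in I$ for all $\alpha<\kappa$ implies $\bigtriangledown_{\alpha<\kappa}X_\alpha\in I$. $I$ is pleasant if whenever $A\in I$ and $X_\alpha\in I$ for all $\alpha$, then $\bigtriangledown_{\alpha\in A}X_\alpha\in I$. $I$ is quasinormal if for every sequence $\langle X_\alpha\rangle_{\alpha<\kappa}$ of members of $I$ there is $Q\in I^*$ with $\bigtriangledown_{\alpha\in Q}X_\alpha\in I$. *)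

(* The cardinal kappa is modelled as a type T carrying a strict
   well-order lt, which is an initial ordinal (a cardinal); subsets of kappa
   are predicates T -> Prop. *)

Definition injective {A B : Type} (f : A -> B) : Prop :=
  forall x y, f x = f y -> x = y.

Definition card_le (A B : Type) : Prop := exists f : A -> B, injective f.

Definition well_order {T : Type} (lt : T -> T -> Prop) : Prop :=
  (forall x, ~ lt x x) /\
  (forall x y z, lt x y -> lt y z -> lt x z) /\
  (forall x y, lt x y \/ x = y \/ lt y x) /\
  well_founded lt.

Definition le_of {T : Type} (lt : T -> T -> Prop) (x y : T) : Prop :=
  lt x y \/ x = y.

Definition is_cardinal {T : Type} (lt : T -> T -> Prop) : Prop :=
  forall a : T, ~ card_le T {x : T | lt x a}.

Definition uncountable (T : Type) : Prop := ~ card_le T nat.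

Definition regular {T : Type} (lt : T -> T -> Prop) : Prop :=
  forall X : T -> Prop,
    (forall a, exists x, X x /\ le_of lt a x) -> card_le T {x : T | X x}.

Definition is_succ {T : Type} (lt : T -> T -> Prop) (a b : T) : Prop :=
  lt a b /\ forall c, lt a c -> le_of lt b c.

Definition thin {T : Type} (lt : T -> T -> Prop) (S : T -> Prop) : Prop :=
  forall a b, S a -> is_succ lt a b -> ~ S b.

Definition is_ideal {T : Type} (I : (T -> Prop) -> Prop) : Prop :=
  (forall X Y : T -> Prop, I Y -> (forall x, X x -> Y x) -> I X) /\
  (forall X Y : T -> Prop, I X -> I Y -> I (fun x => X x \/ Y x)) /\
  (forall (J : Type) (F : J -> T -> Prop),
      ~ card_le T J -> (forall j, I (F j)) -> I (fun x => exists j, F j x)) /\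
  (forall a : T, I (fun x => x = a)).

Definition dual {T : Type} (I : (T -> Prop) -> Prop) (X : T -> Prop) : Prop :=
  I (fun x => ~ X x).

Definition diag_union {T : Type} (lt : T -> T -> Prop)
    (A : T -> Prop) (X : T -> T -> Prop) : T -> Prop :=
  fun xi => exists a, lt a xi /\ A a /\ X a xi.

Definition normal {T : Type} (lt : T -> T -> Prop) (I : (T -> Prop) -> Prop) :=
  forall X : T -> T -> Prop, (forall a, I (X a)) -> I (diag_union lt (fun _ => True) X).

Definition pleasant {T : Type} (lt : T -> T -> Prop) (I : (T -> Prop) -> Prop) :=
  forall (A : T -> Prop) (X : T -> T -> Prop),
    I A -> (forall a, I (X a)) -> I (diag_union lt A X).

Definition quasinormal {T : Type} (lt : T -> T -> Prop) (I : (T -> Prop) -> Prop) :=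
  forall X : T -> T -> Prop, (forall a, I (X a)) ->
    exists Q : T -> Prop, dual I Q /\ I (diag_union lt Q X).

From Stdlib Require Import Classical.

(* Take Q := S.  If xi lies in the diagonal union over S of the X_a via some
   a in S below xi, then either xi is outside S, or xi is in S and so is not
   a+1; hence a+1 < xi, a+1 is outside S by thinness, and xi lies in the
   diagonal union over the complement of S of Y_b := U_{a <= b} X_a, which is
   in I by pleasantness (each Y_b is in I by <kappa-completeness).  Normality
   then follows from quasinormality and pleasantness by splitting the index
   set along Q. *)

Section WellOrder.

Variables (T : Type) (lt : T -> T -> Prop).
Hypothesis Hwo : well_order lt.

Lemma well_order_succ_exists (a : T) :
  (exists x, lt a x) -> exists b, is_succ lt a b.
Proof.
  destruct Hwo as [_ [_ [Htri Hwf]]].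
  intros [x Hax].
  assert (Hmin : exists b, lt a b /\ forall c, lt a c -> ~ lt c b).
  { apply NNPP; intro Hnone.
    assert (Hnot_above : forall c, ~ lt a c).
    { intro c; induction (Hwf c) as [c _ IH]; intro Hac.
      apply Hnone; exists c; split; [exact Hac|].
      intros d Had Hdc; exact (IH d Hdc Had). }
    exact (Hnot_above x Hax). }
  destruct Hmin as [b [Hab Hbmin]]; exists b; split; [exact Hab|].
  intros c Hac; destruct (Htri b c) as [Hbc | [Hbc | Hcb]].
  - left; exact Hbc.
  - right; exact Hbc.
  - exfalso; exact (Hbmin c Hac Hcb).
Qed.

Lemma diag_union_thin_subset (S : T -> Prop) (X : T -> T -> Prop) :
  thin lt S ->
  forall xi, diag_union lt S X xi ->
    diag_union lt (fun b => ~ S b)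
      (fun b x => exists a, le_of lt a b /\ X a x) xi \/ ~ S xi.
Proof.
  intros Hthin xi [a [Haxi [HaS HXa]]].
  destruct (classic (S xi)) as [HSxi | HSxi]; [left | right; exact HSxi].
  destruct (well_order_succ_exists a (ex_intro _ xi Haxi)) as [b Hsucc].
  pose proof (Hthin a b HaS Hsucc) as HbS.
  destruct Hsucc as [Hab Hbleast].
  destruct (Hbleast xi Haxi) as [Hbxi | Hbxi]; [| subst; contradiction].
  exists b; split; [exact Hbxi |]; split; [exact HbS |].
  exists a; split; [left; exact Hab | exact HXa].
Qed.

End WellOrder.

Section Ideal.

Variables (T : Type) (lt : T -> T -> Prop) (I : (T -> Prop) -> Prop).
Hypothesis HI : is_ideal I.

Lemma ideal_subset_union (A B C : T -> Prop) :
  I A -> I B -> (forall x, C x -> A x \/ B x) -> I C.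
Proof.
  destruct HI as [Hsub [Hunion _]].
  intros HA HB HC; exact (Hsub _ _ (Hunion A B HA HB) HC).
Qed.

Lemma ideal_union_le (X : T -> T -> Prop) (b : T) :
  is_cardinal lt -> (forall a, I (X a)) ->
  I (fun x => exists a, le_of lt a b /\ X a x).
Proof.
  destruct HI as [_ [_ [Hcomplete _]]].
  intros Hcard HX.
  apply (ideal_subset_union
           (fun x => exists j : {a : T | lt a b}, X (proj1_sig j) x) (X b)).
  - apply Hcomplete; [apply Hcard | intro j; apply HX].
  - apply HX.
  - intros x [a [[Hab | Hab] HXa]]; [left; exists (exist _ a Hab) | right; subst]; exact HXa.
Qed.

Lemma quasinormal_pleasant_normal :
  quasinormal lt I -> pleasant lt I -> normal lt I.
Proof.
  intros Hqn Hpl X HX.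
  destruct (Hqn X HX) as [Q [HQ HQX]].
  apply (ideal_subset_union _ _ _ HQX (Hpl _ X HQ HX)).
  intros xi [a [Haxi [_ HXa]]].
  destruct (classic (Q a)); [left | right]; exists a; auto.
Qed.

Lemma thin_pleasant_quasinormal (S : T -> Prop) :
  well_order lt -> is_cardinal lt -> pleasant lt I ->
  thin lt S -> dual I S -> quasinormal lt I.
Proof.
  intros Hwo Hcard Hpl Hthin HS X HX.
  exists S; split; [exact HS |].
  apply (ideal_subset_union _ _ _ (Hpl _ _ HS (fun b => ideal_union_le X b Hcard HX)) HS).
  exact (diag_union_thin_subset T lt Hwo S X Hthin).
Qed.

End Ideal.

Theorem theorem3p11 (T : Type) (lt : T -> T -> Prop)
  (Hwo : well_order lt) (Hcard : is_cardinal lt) (Hunc : uncountable T)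
  (Hreg : regular lt)
  (I : (T -> Prop) -> Prop) (HI : is_ideal I) (Hpl : pleasant lt I)
  (Hthin : exists S : T -> Prop, thin lt S /\ dual I S) :
  quasinormal lt I /\ normal lt I.
Proof.
  destruct Hthin as [S [HSthin HS]].
  assert (Hqn : quasinormal lt I)
    by exact (thin_pleasant_quasinormal T lt I HI S Hwo Hcard Hpl HSthin HS).
  split; [exact Hqn | exact (quasinormal_pleasant_normal T lt I HI Hqn Hpl)].
Qed.
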